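(* Let $(N,M,W,C,P,\infty)$ be an MRS-situation with unbounded production and $(N,M,v)$ the corresponding MRS-game, and suppose $|M^o|\ge 2$. Then for every $y$ in the core of $(N,M,v)$, $y_j=0$ for all $j\in M$.
   Context: An MRS-situation $(N,M,W,C,P,\overline{Q})$ consists of a finite set $N$ of retailers and a finite set $M$ of suppliers (distinct agents), and: for each $j\in M$ a unit production cost $c_j:[0,\infty)\to(0,\infty)$, decreasing and continuous with $c_j(q)q$ nondecreasing, and a wholesale price $w_j:[0,\infty)\to(0,\infty)$, nonincreasing and continuous, with $w_j(q)>c_j(q)$ for all $q\ge0$ and $w_j(q)q$ nondecreasing; for each $i\in N$ a selling price $p_i:[0,\infty)\to\mathbb{R}$, nonincreasing and continuous, with $p_i(0)>w_j(0)$ for all $j$, and $q_i^*>0$ with $p_i(q_i^* )=0$; and capacities $\overline{q}_{ij}\in(0,\infty)$. Unbounded production, written $(N,M,W,C,P,\infty)$, means $\overline{q}_{ij}=K$ for all $i,j$ with $K$ large enough that capacities do not affect optimal solutions (e.g. $K\ge\max_i q_i^*$). For an order matrix $q=(q_{ij})_{i\in R,j\in M}\ge0$: $q_{Rj}=\sum_{i\in R}q_{ij}$, $q_{iM}=\sum_{j}q_{ij}$, $q_{RS}=\sum_{j\in S}\sum_{i\in R}q_{ij}$, $q_i=(q_{ij})_j$, $q_R=(q_{Rj})_j$; $c_S(x)=\min_{j\in S}c_j(x)$. For $i\in R$: $\Pi_i(q_i,\Psi^S(q_R))=p_i(q_{iM})q_{iM}-\sum_{j\in S}c_S(q_{RS})q_{ij}-\sum_{j\in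 M\setminus S}w_j(q_{Rj})q_{ij}$. $\mathbb{Q}^R=\{q\in\mathbb{R}_+^{R\times M}: q_{iM}\le q_i^*,\ q_{ij}\le\overline{q}_{ij}\}$; $q^{(R,S)}$ is an optimal solution of $\max\{\sum_{i\in R}\Pi_i(q_i,\Psi^S(q_R)):q\in\mathbb{Q}^R\}$. MRS-game on player set $N\cup M$: $v(R,S)=\sum_{i\in R}\Pi_i(q_i^{(R,S)},\Psi^S(q_R^{(R,S)}))$ for $\emptyset\ne R\subseteq N$, $S\subseteq M$, $v(\emptyset,S)=0$. Core: $\{x\in\mathbb{R}^{N\cup M}:\sum_{k\in N\cup M}x_k=v(N,M),\ \sum_{k\in R\cup S}x_k\ge v(R,S)\ \forall R\subseteq N,S\subseteq M\}$. A supplier $j$ is optimal if $v(N,M)=v(N,\{j\})$; $M^o$ is the set of optimal suppliers. *)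

From HB Require Import structures.
From mathcomp Require Import all_boot all_order all_algebra.
From mathcomp Require Import all_classical all_reals all_analysis.
Set Implicit Arguments. Unset Strict Implicit. Unset Printing Implicit Defensive.
Import Order.TTheory GRing.Theory Num.Theory.
Import numFieldNormedType.Exports.
Local Open Scope classical_set_scope.
Local Open Scope ring_scope.

Section MRS.
Variables (R : realType) (N M : finType).

Definition nonneg_half : set R := [set x | 0 <= x].

Definition MRS_situation (c w : M -> R -> R) (p : N -> R -> R)
  (qstar : N -> R) (qbar : N -> M -> R) : Prop :=
  [/\ (forall j,
        [/\ (forall x, 0 <= x -> 0 < c j x),
            (forall x y, 0 <= x -> x < y -> c j y < c j x),
            {within nonneg_half, continuous (c j)}
          & (forall x y, 0 <= x -> x <= y -> c j x * x <= c j y * y)]),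
      (forall j,
        [/\ (forall x, 0 <= x -> 0 < w j x),
            (forall x y, 0 <= x -> x <= y -> w j y <= w j x),
            {within nonneg_half, continuous (w j)},
            (forall x, 0 <= x -> c j x < w j x)
          & (forall x y, 0 <= x -> x <= y -> w j x * x <= w j y * y)]),
      (forall i,
        [/\ (forall x y, 0 <= x -> x <= y -> p i y <= p i x),
            {within nonneg_half, continuous (p i)},
            (forall j, w j 0 < p i 0),
            0 < qstar i
          & p i (qstar i) = 0])
    & (forall i j, 0 < qbar i j)].

(* order matrices are functions N -> M -> R *)
Definition qRj (Rc : {set N}) (q : N -> M -> R) (j : M) : R :=
  \sum_(i in Rc) q i j.
Definition qiM (q : N -> M -> R) (i : N) : R := \sum_(j : M) q i j.
Definition qRS (Rc : {set N}) (Sc : {set M}) (q : N -> M -> R) : R :=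
  \sum_(j in Sc) qRj Rc q j.

(* c_S(x) = min_{j in S} c_j(x)  (arbitrary value 0 when S is empty; it is
   then never used since it only appears in sums over j in S) *)
Definition cS (c : M -> R -> R) (Sc : {set M}) (x : R) : R :=
  match [pick j in Sc] with
  | Some j0 => \big[Num.min/c j0 x]_(j in Sc) c j x
  | None => 0
  end.

Definition Pi (c w : M -> R -> R) (p : N -> R -> R)
  (Rc : {set N}) (Sc : {set M}) (q : N -> M -> R) (i : N) : R :=
  p i (qiM q i) * qiM q i
  - \sum_(j in Sc) cS c Sc (qRS Rc Sc q) * q i j
  - \sum_(j in ~: Sc) w j (qRj Rc q j) * q i j.

(* feasible set Q^R (entries of rows outside R are fixed to 0) *)
Definition QR (qstar : N -> R) (qbar : N -> M -> R) (Rc : {set N})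
  : set (N -> M -> R) :=
  [set q | (forall i j, i \in Rc -> 0 <= q i j /\ q i j <= qbar i j)
         /\ (forall i, i \in Rc -> qiM q i <= qstar i)
         /\ (forall i j, i \notin Rc -> q i j = 0)].

Definition MRSgame (c w : M -> R -> R) (p : N -> R -> R)
  (qstar : N -> R) (qbar : N -> M -> R) (Rc : {set N}) (Sc : {set M}) : R :=
  if Rc == finset.set0 then 0
  else sup [set \sum_(i in Rc) Pi c w p Rc Sc q i | q in QR qstar qbar Rc].

Definition core (v : {set N} -> {set M} -> R) : set (N + M -> R) :=
  [set x | \sum_(k : N + M) x k = v (finset.setT : {set N}) (finset.setT : {set M})
         /\ (forall (Rc : {set N}) (Sc : {set M}),
               v Rc Sc <= \sum_(i in Rc) x (inl i) + \sum_(j in Sc) x (inr j))].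

Definition optimal_suppliers (v : {set N} -> {set M} -> R) : {set M} :=
  finset.finset (fun j => v (finset.setT : {set N}) (finset.setT : {set M}) == v (finset.setT : {set N}) (finset.set1 j)).

End MRS.

From HB Require Import structures.
From mathcomp Require Import all_boot all_order all_algebra.
From mathcomp Require Import all_classical all_reals all_analysis.
Set Implicit Arguments. Unset Strict Implicit. Unset Printing Implicit Defensive.
Import Order.TTheory GRing.Theory Num.Theory.
Local Open Scope ring_scope.

(* Since the coalition ({}, {j}) is worth nothing, every supplier gets a
   nonnegative core payoff.  If j0 is an optimal supplier, the coalition
   (N, {j0}) already earns v(N, M), so the core payoffs of the other suppliers
   sum to at most 0 and therefore all vanish.  With two distinct optimal
   suppliers every supplier differs from one of them. *)

Section CoreSuppliers.
Variables (R : realType) (N M : finType) (v : {set N} -> {set M} -> R).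
Hypothesis v_set0 : forall S, v finset.set0 S = 0.

Lemma core_supplier_ge0 (y : N + M -> R) : core v y -> forall j, 0 <= y (inr j).
Proof.
move=> [_ y_core] j; move: y_core => /(_ finset.set0 (finset.set1 j)).
by rewrite v_set0 big_set0 add0r big_set1.
Qed.

Lemma sum_players_split (y : N + M -> R) :
  \sum_(k : N + M) y k = \sum_(i in finset.setT) y (inl i) + \sum_(j : M) y (inr j).
Proof.
by rewrite big_sumType; congr (_ + _); apply: eq_bigl => i; rewrite inE.
Qed.

Lemma core_supplier_eq0_of_optimal (y : N + M -> R) j0 j :
  core v y -> j0 \in optimal_suppliers v -> j != j0 -> y (inr j) = 0.
Proof.
move=> yc; rewrite inE => /eqP v_j0 neq_jj0.
have others_le0 : \sum_(k | k != j0) y (inr k) <= 0.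
  case: yc => y_sum /(_ finset.setT (finset.set1 j0)).
  rewrite -v_j0 -y_sum sum_players_split big_set1 (bigD1 j0) //= addrA.
  by rewrite -[X in _ <= X]addr0 lerD2l.
have others_eq0 : \sum_(k | k != j0) y (inr k) = 0.
  apply/eqP; rewrite eq_le others_le0 sumr_ge0 // => k _.
  exact: core_supplier_ge0.
apply: (psumr_eq0P _ others_eq0) => // k _; exact: core_supplier_ge0.
Qed.

Lemma core_suppliers_eq0 (y : N + M -> R) :
  (1 < #|optimal_suppliers v|)%N -> core v y -> forall j, y (inr j) = 0.
Proof.
move=> /card_gt1P [j1 [j2 [opt_j1 opt_j2 neq_j12]]] yc j.
have [->|neq_jj1] := eqVneq j j1.
  exact: core_supplier_eq0_of_optimal opt_j2 neq_j12.
exact: core_supplier_eq0_of_optimal opt_j1 neq_jj1.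
Qed.

End CoreSuppliers.

Lemma MRSgame_set0 (R : realType) (N M : finType) (c w : M -> R -> R)
    (p : N -> R -> R) (qstar : N -> R) (qbar : N -> M -> R) S :
  MRSgame c w p qstar qbar finset.set0 S = 0.
Proof. by rewrite /MRSgame eqxx. Qed.

Theorem theorem3 (R : realType) (N M : finType)
  (c w : M -> R -> R) (p : N -> R -> R) (qstar : N -> R) (K : R) :
  MRS_situation c w p qstar (fun _ _ => K) ->
  (forall i, qstar i <= K) ->
  (2 <= #|optimal_suppliers (MRSgame c w p qstar (fun _ _ => K))|)%N ->
  forall y : N + M -> R, core (MRSgame c w p qstar (fun _ _ => K)) y ->
  forall j : M, y (inr j) = 0.
Proof.
move=> _ _ two_optimal y yc.
apply: core_suppliers_eq0 two_optimal yc => S.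
exact: MRSgame_set0.
Qed.
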